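(* Let $\sigma$ be a permutation of $\{1,\ldots,n\}$ with $\sigma(i)\neq i$ for all $i$. Then there exists a partition $U_1,U_2,U_3$ of $\{1,\ldots,n\}$ such that for each $j\in\{1,2,3\}$, $|U_j|\in[\frac{n}{4}-1,\frac{n}{2}+1]$ and $U_j\cap\sigma(U_j)=\emptyset$. *)

From mathcomp Require Import all_boot all_order all_algebra all_fingroup.
Set Implicit Arguments. Unset Strict Implicit. Unset Printing Implicit Defensive.

From mathcomp Require Import all_boot all_order all_algebra all_fingroup.
From mathcomp Require Import zify lra.
Import GRing.Theory Num.Theory.

Set Implicit Arguments.
Unset Strict Implicit.
Unset Printing Implicit Defensive.

(** Call [A] independent when [A] and [s @: A] are disjoint, so that
    [2|A| <= n].  Since [s] has no fixed point, a maximal independent [A]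
    dominates: every [x] outside [A] has [s x] or [s^-1 x] in [A], whence
    [n <= 3|A|].  The complement of [A] splits into [L], where [s x] is not in
    [A], and [R], where it is; both are independent ([s (s x)] lies in [A] for
    [x] in [L], by domination at [s x]) and [s] maps [L] injectively into [R].
    Moving half of [R :\: s @: L] over to [L] balances the two sizes up to one
    and keeps both independent, so all three parts have size in
    [[n/4 - 1, n/2 + 1]]. *)

Lemma subset_of_card (T : finType) (A : {set T}) k :
  k <= #|A| -> exists2 B : {set T}, B \subset A & #|B| = k.
Proof.
case/card_geqP=> e [e_uniq e_size eA]; exists [set x in e].
  by apply/subsetP=> x; rewrite inE => /eA.
by rewrite cardsE (card_uniqP e_uniq).
Qed.

Section PermIndependentSets.

Variables (T : finType) (s : {perm T}).

Definition independent (A : {set T}) := [disjoint A & s @: A].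

Lemma independentP (A : {set T}) :
  reflect {in A, forall x, s x \notin A} (independent A).
Proof.
rewrite /independent disjoint_sym disjoints_subset.
apply: (iffP subsetP) => [sAC x xA | indA _ /imsetP[x xA ->]].
  by have := sAC (s x) (imset_f s xA); rewrite inE.
by rewrite inE indA.
Qed.

Lemma independentS (A B : {set T}) : A \subset B -> independent B -> independent A.
Proof.
move=> /subsetP AB /independentP indB; apply/independentP=> x /AB xB.
by apply: contra (indB x xB) => /AB.
Qed.

Lemma card_independent (A : {set T}) : independent A -> 2 * #|A| <= #|T|.
Proof.
move=> indA; have := cardsUI A (s @: A).
rewrite (disjoint_setI0 indA) cards0 card_imset; last exact: perm_inj.
have := max_card (A :|: s @: A); lia.
Qed.

Definition dominating (A : {set T}) :=
  forall x, x \notin A -> (s x \in A) || ((s^-1)%g x \in A).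

Lemma card_dominating (A : {set T}) : dominating A -> #|T| <= 3 * #|A|.
Proof.
move=> domA; have covC : ~: A \subset ((s^-1)%g @: A) :|: (s @: A).
  apply/subsetP=> x; rewrite inE => /domA /orP[sxA | s'xA]; rewrite inE.
    by apply/orP; left; apply/imsetP; exists (s x); rewrite ?permK.
  by apply/orP; right; apply/imsetP; exists ((s^-1)%g x); rewrite ?permKV.
have := subset_leq_card covC; have := cardsUI ((s^-1)%g @: A) (s @: A).
have := leq_imset_card (s^-1)%g A; have := leq_imset_card s A.
have := cardsC A; lia.
Qed.

Lemma dominating_split (A : {set T}) : dominating A ->
  exists B C : {set T},
    [/\ B :|: C = ~: A, [disjoint B & C], independent B, independent C
       & #|B| <= #|C| <= #|B|.+1].
Proof.
move=> domA.
pose L := [set x | x \notin A & s x \notin A].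
pose R := [set x | x \notin A & s x \in A].
have sLR : s @: L \subset R.
  apply/subsetP=> _ /imsetP[x + ->]; rewrite !inE => /andP[xA sxA].
  by rewrite sxA /=; have := domA _ sxA; rewrite permK (negbTE xA) orbF.
have disjLR : [disjoint L & R].
  rewrite disjoint_sym disjoints_subset; apply/subsetP=> x.
  by rewrite !inE => /andP[_ ->]; rewrite /= andbF.
have indR : independent R by apply/independentP=> x; rewrite !inE => /andP[_ ->].
have /subset_of_card[D DRL cardD] : (#|R| - #|L|)./2 <= #|R :\: s @: L|.
  by rewrite cardsDS // (card_imset _ (@perm_inj _ s)) leq_half_double; lia.
have [DR DsL] : D \subset R /\ [disjoint D & s @: L].
  by move: DRL; rewrite subsetD => /andP[].
have LR : L :|: R = ~: A.
  by apply/setP=> x; rewrite !inE; case: (x \in A); case: (s x \in A).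
have cardLR : #|L| <= #|R|.
  by rewrite -(card_imset L (@perm_inj _ s)) subset_leq_card.
exists (L :|: D), (R :\: D); split.
- rewrite -LR -setUA; congr (L :|: _); apply/setP=> x; rewrite in_setU in_setD.
  by case: (boolP (x \in D)) => [/(subsetP DR)-> | _].
- rewrite disjoint_sym disjoints_subset; apply/subsetP=> x.
  rewrite in_setD in_setC in_setU negb_or => /andP[xD xR].
  by rewrite xD andbT (disjointFl disjLR xR).
- apply/independentP=> x; rewrite !in_setU negb_or => /orP[xL | xD].
    have sxR : s x \in R by rewrite (subsetP sLR) ?imset_f.
    by rewrite (disjointFl disjLR sxR) (disjointFl DsL) ?imset_f.
  have := subsetP DR x xD; rewrite inE => /andP[_ sxA].
  by rewrite inE sxA /=; apply/negP=> /(subsetP DR); rewrite inE sxA.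
- exact: independentS (subsetDl R D) indR.
- have /eqP -> : #|L :|: D| == #|L| + #|D|.
    by rewrite (leq_card_setU L D) (disjointWr DR disjLR).
  rewrite cardsDS // cardD.
  have := odd_double_half (#|R| - #|L|); rewrite -addnn.
  have := leq_b1 (odd (#|R| - #|L|)); lia.
Qed.

Hypothesis s_derangement : forall x, s x != x.

Lemma maxset_independent_dominating (A : {set T}) :
  maxset independent A -> dominating A.
Proof.
case/maxsetP=> /independentP indA maxA x xA.
apply/negPn/negP => /norP[sxA s'xA].
have indxA : independent (x |: A).
  apply/independentP=> y; rewrite !in_setU1 => /predU1P[-> | yA].
    by rewrite negb_or s_derangement.
  rewrite negb_or indA // andbT; apply: contra s'xA => /eqP <-.
  by rewrite permK.
by have /setP/(_ x) := maxA _ indxA (subsetUr _ _); rewrite setU11 (negbTE xA).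
Qed.

Lemma exists_independent_dominating : exists2 A, independent A & dominating A.
Proof.
have independent0 : independent set0 by apply/independentP=> x; rewrite inE.
have [A maxA _] := maxset_exists independent0.
by exists A; [case/maxsetP: maxA | apply: maxset_independent_dominating].
Qed.

End PermIndependentSets.

Local Open Scope ring_scope.

Theorem lemma5 (n : nat) (s : {perm 'I_n}) (hs : forall i : 'I_n, s i != i) :
  exists U1 U2 U3 : {set 'I_n},
    [/\ U1 :|: U2 :|: U3 = [set: 'I_n],
        [disjoint U1 & U2], [disjoint U1 & U3], [disjoint U2 & U3] &
        forall U, U \in [:: U1; U2; U3] ->
          [/\ (n%:Q / 4 - 1 <= (#|U|)%:Q), ((#|U|)%:Q <= n%:Q / 2 + 1) &
              U :&: (s @: U) = set0]].
Proof.
have [A indA domA] := exists_independent_dominating hs.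
have [B [C [BC_A disjBC indB indC /andP[B_le_C C_le_B]]]] := dominating_split domA.
have /eqP cardBC : #|B :|: C| == (#|B| + #|C|)%N by rewrite leq_card_setU.
have := cardsC A; have := card_independent indA; have := card_dominating domA.
rewrite -BC_A cardBC card_ord => A_lo A_hi cardABC.
have bounds U : U \in [:: A; B; C] ->
    [/\ (n <= 4 * #|U| + 4)%N, (2 * #|U| <= n + 2)%N & independent s U].
  by rewrite !inE => /or3P[]/eqP->; split=> //; lia.
exists A, B, C; split=> [||||U /bounds[lo hi indU]].
- by rewrite -setUA BC_A setUCr.
- by rewrite disjoint_sym disjoints_subset -BC_A subsetUl.
- by rewrite disjoint_sym disjoints_subset -BC_A subsetUr.
- exact: disjBC.
split; last exact: disjoint_setI0.
- by move: lo; rewrite -(ler_nat rat) natrD natrM => lo; lra.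
- by move: hi; rewrite -(ler_nat rat) natrD natrM => hi; lra.
Qed.
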